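(* Let $\Gamma\subset PGL_{2n+2}(\mathbb{C})$ be a group of type $\mathcal{L}$. Then for any normal sequence $(\sigma_\nu)$ in $\Gamma$, the limit image $I(\hat\sigma_\nu)\subset\mathbb{P}^N$ of the sequence $(\hat\sigma_\nu)$ consists of a single point, and this point lies in $\mathcal{G}$.
   Context: Fix $n\geq1$. An $n$-plane is an $n$-dimensional projective linear subspace of $\mathbb{P}^{2n+1}$; $|\ell|$ denotes its point set. Let $N=\binom{2n+2}{n+1}-1$, $\mathbb{P}^N=\mathbb{P}(\Lambda^{n+1}\mathbb{C}^{2n+2})$, and $\mathcal{G}\subset\mathbb{P}^N$ the Grassmannian $Gr(n+1,2n+2)$ embedded by Plücker coordinates; $\hat\ell\in\mathcal{G}$ is the point of an $n$-plane $\ell$. Each $\sigma\in PGL_{2n+2}(\mathbb{C})$ induces $\hat\sigma\in PGL_{N+1}(\mathbb{C})$ via the action of $\Lambda^{n+1}$ of a representative. For a sequence $(\tau_\nu)$ of pairwise distinct elements of $PGL_{m+1}(\mathbb{C})$, pick representatives $\tilde\tau_\nu\in GL_{m+1}(\mathbb{C})$ whose largest entry in absolute value is $1$; if they can be chosen to converge to a matrix $T\in M_{m+1}(\mathbb{C})$, the limit image of $(\tau_\nu)$ is $\mathbb{P}(\operatorname{Im}T)$ and the limit kernel is $\mathbb{P}(\operatorname{Ker}T)$. For a discrete subgroup $\Gamma\subset PGL_{2n+2}(\mathbb{C})$, a sequence $(\sigma_\nu)\subset\Gamma$ is normal if it consists of distinct elements and both $(\sigma_\nu)$ and $(\hat\sigma_\nu)$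 admit such convergent normalized representatives. An $n$-plane $\ell$ is a limit $n$-plane of $\Gamma$ if $\hat\ell\in\mathcal{G}\cap I(\hat\sigma_\nu)$ for some normal sequence $(\sigma_\nu)$ in $\Gamma$, where $I(\hat\sigma_\nu)$ is the limit image of $(\hat\sigma_\nu)$. $\Lambda(\Gamma)$ is the union of $|\ell|$ over all limit $n$-planes and $\Omega(\Gamma)=\mathbb{P}^{2n+1}\setminus\Lambda(\Gamma)$. A domain in $\mathbb{P}^{2n+1}$ is large if it contains an $n$-plane. A discrete subgroup $\Gamma\subset PGL_{2n+2}(\mathbb{C})$ is of type $\mathcal{L}$ if $\Omega(\Gamma)$ contains a large domain. *)

From HB Require Import structures.
From mathcomp Require Import all_boot all_order all_algebra.
From mathcomp Require Import reals.
From mathcomp.real_closed Require Import complex.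
Set Implicit Arguments. Unset Strict Implicit. Unset Printing Implicit Defensive.
Import Order.TTheory GRing.Theory Num.Theory.
Local Open Scope ring_scope.

(* k-element subsets of 'I_m : the index set of the standard basis
   e_{i_1} /\ ... /\ e_{i_k} (i_1 < ... < i_k) of Lambda^k C^m. *)
Notation ksub m k := {S : {set 'I_m} | #|S| == k}.

Definition ksub_idx m k (S : ksub m k) (a : 'I_k) : 'I_m :=
  enum_val (cast_ord (esym (eqP (valP S))) a).

Section Defs.
Variable R : realType.
Local Notation C := R[i].

Definition cabs (z : C) : R := ComplexField.Normc.normc z.

Definition nonzero (I : finType) (v : I -> C) := exists i, v i != 0.

Definition appl (I J : finType) (A : I -> J -> C) (u : J -> C) : I -> C :=
  fun i => \sum_j A i j * u j.

(* A and B represent the same projective transformation / element of PGL *)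
Definition proportional (I J : finType) (A B : I -> J -> C) :=
  exists c : C, c != 0 /\ forall i j, A i j = c * B i j.

Definition normalized (I J : finType) (A : I -> J -> C) :=
  (forall i j, cabs (A i j) <= 1) /\ exists i j, cabs (A i j) = 1.

Definition cvg_mat (I J : finType) (M : nat -> I -> J -> C) (T : I -> J -> C) :=
  forall e : R, 0 < e -> exists N : nat, forall nu : nat, (N <= nu)%N ->
    forall i j, cabs (M nu i j - T i j) < e.

(* T is a limit of normalized representatives of the projective classes of
   the M nu : representatives are the nonzero scalar multiples c * M nu. *)
Definition limit_of (I J : finType) (M : nat -> I -> J -> C) (T : I -> J -> C) :=
  exists c : nat -> C, (forall nu, c nu != 0) /\
    (forall nu, normalized (fun i j => c nu * M nu i j)) /\
    cvg_mat (fun nu i j => c nu * M nu i j) T.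

(* the point [v] of P(C^I) lies in the limit image P(Im T) of (M nu) *)
Definition in_limit_image (I : finType) (M : nat -> I -> I -> C) (v : I -> C) :=
  exists T, limit_of M T /\ nonzero v /\ exists u, forall i, v i = appl T u i.

(* Lambda^k g, in the basis of k-subsets: entries are the k x k minors *)
Definition extp m k (g : 'M[C]_m) : ksub m k -> ksub m k -> C :=
  fun S T => \det (\matrix_(a < k, b < k) g (ksub_idx S a) (ksub_idx T b)).

Arguments extp {m} k g.

Definition plucker k m (B : 'M[C]_(k, m)) : ksub m k -> C :=
  fun S => \det (\matrix_(a < k, b < k) B a (ksub_idx S b)).

(* an n-plane of P^(2n+1) is given by B : 'M_(n+1, 2n+2) with row_free B
   (its rows span the corresponding (n+1)-dim. subspace); x represents a
   point of |l| iff x is a nonzero vector of the row space of B. *)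
Definition in_plane k m (B : 'M[C]_(k, m)) (x : 'I_m -> C) :=
  nonzero x /\ exists u : 'I_k -> C, forall j, x j = \sum_a u a * B a j.

(* A subgroup Gamma of PGL_m(C) is encoded by its full preimage G in
   GL_m(C): a subgroup of GL_m(C) containing all nonzero scalar matrices. *)
Definition pgl_subgroup m (G : 'M[C]_m -> Prop) :=
  (forall g, G g -> g \in unitmx) /\ G 1%:M /\
  (forall g h, G g -> G h -> G (g *m h)) /\
  (forall g, G g -> G (invmx g)) /\
  (forall g c, G g -> c != 0 -> G (c *: g)).

(* discreteness in PGL_m(C) (quotient topology): every element [gamma] has
   a neighbourhood { [h] : |h - gamma| < e } containing no other element. *)
Definition pgl_discrete m (G : 'M[C]_m -> Prop) :=
  forall gamma, G gamma -> exists e : R, 0 < e /\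
    forall g c, G g -> c != 0 ->
      (forall i j, cabs (c * g i j - gamma i j) < e) ->
      proportional (fun i j => g i j) (fun i j => gamma i j).

Definition mfun m (g : 'M[C]_m) : 'I_m -> 'I_m -> C := fun i j => g i j.

Definition normal_seq n (G : 'M[C]_(n.*2.+2) -> Prop)
    (s : nat -> 'M[C]_(n.*2.+2)) :=
  (forall nu, G (s nu)) /\
  (forall nu mu, nu <> mu -> ~ proportional (mfun (s nu)) (mfun (s mu))) /\
  (exists T, limit_of (fun nu => mfun (s nu)) T) /\
  (exists T, limit_of (fun nu => extp n.+1 (s nu)) T).

Definition limit_plane n (G : 'M[C]_(n.*2.+2) -> Prop)
    (B : 'M[C]_(n.+1, n.*2.+2)) :=
  row_free B /\ exists s, normal_seq G s /\
    in_limit_image (fun nu => extp n.+1 (s nu)) (plucker B).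

Definition Lambda n (G : 'M[C]_(n.*2.+2) -> Prop) (x : 'I_(n.*2.+2) -> C) :=
  exists B, limit_plane G B /\ in_plane B x.

Definition Omega n (G : 'M[C]_(n.*2.+2) -> Prop) (x : 'I_(n.*2.+2) -> C) :=
  nonzero x /\ ~ Lambda G x.

(* subsets of P(C^I) are encoded by their (saturated) preimages *)
Definition cone (I : finType) (D : (I -> C) -> Prop) :=
  (forall x, D x -> nonzero x) /\
  (forall x c, D x -> c != 0 -> D (fun i => c * x i)).

Definition open_vset (I : finType) (U : (I -> C) -> Prop) :=
  forall x, U x -> exists e : R, 0 < e /\
    forall y, (forall i, cabs (y i - x i) < e) -> U y.

Definition proj_open (I : finType) (U : (I -> C) -> Prop) :=
  cone U /\ open_vset U.

Definition proj_connected (I : finType) (D : (I -> C) -> Prop) :=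
  ~ exists U V, proj_open U /\ proj_open V /\
      (forall x, D x -> U x \/ V x) /\
      (exists x, D x /\ U x) /\ (exists x, D x /\ V x) /\
      (forall x, D x -> U x -> V x -> False).

Definition proj_domain (I : finType) (D : (I -> C) -> Prop) :=
  proj_open D /\ (exists x, D x) /\ proj_connected D.

Definition large_domain n (D : ('I_(n.*2.+2) -> C) -> Prop) :=
  proj_domain D /\
  exists B : 'M[C]_(n.+1, n.*2.+2), row_free B /\ forall x, in_plane B x -> D x.

Definition type_L n (G : 'M[C]_(n.*2.+2) -> Prop) :=
  pgl_subgroup G /\ pgl_discrete G /\
  exists D, large_domain D /\ forall x, D x -> Omega G x.

End Defs.
Arguments extp {R m} k g.

From HB Require Import structures.
From mathcomp Require Import all_boot all_order all_fingroup all_algebra.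
From mathcomp Require Import reals.
From mathcomp.real_closed Require Import complex.
From mathcomp Require Import ring lra.
Set Implicit Arguments. Unset Strict Implicit. Unset Printing Implicit Defensive.
Import Order.TTheory GRing.Theory Num.Theory.
Local Open Scope ring_scope.

(* Write k = n + 1, m = 2n + 2 and T for the limit of c_nu Lambda^k s_nu.  For a
   k x m matrix Y, T applied to the Pluecker vector of Y is the limit of the
   decomposable vectors c_nu pl(Y s_nu^T); decomposable vectors form a closed cone,
   so every nonzero such vector is the Pluecker vector of an n-plane, which is then
   a limit n-plane.  Limit n-planes miss the n-plane B0 lying in Omega, and meeting
   B0 is the vanishing of a linear form psi in Pluecker coordinates.  Hence, as
   functions of Y, the form psi(T pl(Y)) vanishes only where every coordinate of
   T pl(Y) does.  A linear form on the Grassmannian vanishing on the zero set of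
   another non-zero one is proportional to it (the hyperplane section is
   irreducible); so T pl(Y) is always a multiple of one decomposable vector, and
   the image of T is a single point of the Grassmannian. *)

Section KSubsets.
Variables m k : nat.
Implicit Types S T : ksub m k.

Lemma ksub_idx_in S a : ksub_idx S a \in val S.
Proof. exact: enum_valP. Qed.

Lemma ksub_idx_inj S : injective (ksub_idx S).
Proof. by move=> a b /enum_val_inj /cast_ord_inj. Qed.

Lemma ksub_idx_onto S x : x \in val S -> exists a, ksub_idx S a = x.
Proof.
move=> Sx; exists (cast_ord (eqP (valP S)) (enum_rank_in Sx x)).
by rewrite /ksub_idx cast_ordK enum_rankK_in.
Qed.

Lemma ksub_subset_eq S T : val S \subset val T -> S = T.
Proof.
move=> sST; apply/val_inj/eqP.
by rewrite eqEcard sST (eqP (valP S)) (eqP (valP T)) /=.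
Qed.

End KSubsets.

Section PluckerCoordinates.
Variable F : comPzRingType.
Variables k m : nat.
Implicit Types S T : ksub m k.

Definition pluck (B : 'M[F]_(k, m)) S : F := \det (colsub (ksub_idx S) B).

Definition ksub_sel S : 'M[F]_(k, m) := \matrix_(a, j) (j == ksub_idx S a)%:R.

Lemma pluck_ksub_sel S T : pluck (ksub_sel S) T = (T == S)%:R.
Proof.
rewrite /pluck; have [<-|neST] := eqVneq T S.
  have -> : colsub (ksub_idx T) (ksub_sel T) = 1%:M.
    by apply/matrixP => a b; rewrite !mxE (inj_eq (@ksub_idx_inj _ _ T)) eq_sym.
  by rewrite det1.
have /subsetPn [x xS xT] : ~~ (val S \subset val T).
  by apply: contra neST => /ksub_subset_eq ->.
have [a Ea] := ksub_idx_onto xS.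
rewrite (expand_det_row _ a) big1 // => b _; rewrite !mxE.
case: eqP => [Eb|]; last by rewrite mul0r.
by move: xT; rewrite -Ea -Eb ksub_idx_in.
Qed.

Lemma mulmx_ksub_selT n (A : 'M[F]_(n, m)) S :
  A *m (ksub_sel S)^T = colsub (ksub_idx S) A.
Proof.
apply/matrixP => i b; rewrite !mxE (bigD1 (ksub_idx S b)) //= !mxE eqxx mulr1.
by rewrite big1 ?addr0 // => j /negPf nj; rewrite !mxE nj mulr0.
Qed.

Lemma pluck_mulmx (M : 'M[F]_k) (B : 'M[F]_(k, m)) S :
  pluck (M *m B) S = \det M * pluck B S.
Proof. by rewrite /pluck -mulmx_colsub det_mulmx. Qed.

Lemma pluckZ c (B : 'M[F]_(k, m)) S : pluck (c *: B) S = c ^+ k * pluck B S.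
Proof. by rewrite -mul_scalar_mx pluck_mulmx det_scalar. Qed.

(* [km] only serves to name some k-subset when f is not injective. *)
Hypothesis km : (k <= m)%N.

Lemma det_colsub_pluck (f : 'I_k -> 'I_m) :
  {p : F * ksub m k | forall B : 'M[F]_(k, m),
    \det (colsub f B) = p.1 * pluck B p.2}.
Proof.
have [/injectiveP f_inj | f_ninj] := boolP (injectiveb f); last first.
  have widen_inj : injective (widen_ord km) by move=> a b /(congr1 val) /= /ord_inj.
  have cardS0 : #|[set widen_ord km a | a : 'I_k]| == k.
    by rewrite card_imset ?cardsT ?card_ord.
  exists (0, exist (fun S : {set 'I_m} => #|S| == k) _ cardS0) => B.
  have /injectivePn [a1 [a2 neq12 eq12]] := f_ninj.
  by rewrite mul0r -det_tr (determinant_alternate neq12) // => j; rewrite !mxE eq12.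
have cardT : #|f @: setT| == k by rewrite card_imset ?cardsT ?card_ord.
pose T : ksub m k := exist (fun S : {set 'I_m} => #|S| == k) _ cardT.
pose g a := odflt a [pick b | ksub_idx T b == f a].
have gE a : ksub_idx T (g a) = f a.
  rewrite /g; case: pickP => [b /eqP //|none].
  have [b Eb] := ksub_idx_onto (imset_f f (in_setT a) : f a \in val T).
  by move: (none b); rewrite Eb eqxx.
have g_inj : injective g by move=> a b /(congr1 (ksub_idx T)); rewrite !gE => /f_inj.
exists ((-1) ^+ perm g_inj, T) => B /=.
have -> : colsub f B = col_perm (perm g_inj) (colsub (ksub_idx T) B).
  by apply/matrixP => i j; rewrite !mxE permE gE.
by rewrite col_permE det_mulmx det_perm odd_permV mulrC.
Qed.

Lemma det_mulmx_expand (A : 'M[F]_(k, m)) (B : 'M[F]_(m, k)) :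
  \det (A *m B) =
    \sum_(f : {ffun 'I_k -> 'I_m}) (\prod_i A i (f i)) * \det (rowsub f B).
Proof.
pose AB (s : 'S_k) i j := A i j * B j (s i).
transitivity (\sum_(s : 'S_k) \sum_(f : {ffun 'I_k -> 'I_m})
                 (-1) ^+ s * \prod_i AB s i (f i)).
  apply: eq_bigr => s _; rewrite -big_distrr /= -(bigA_distr_bigA (AB s)) /=.
  by congr (_ * _); apply: eq_bigr => i _; rewrite mxE.
rewrite exchange_big; apply: eq_bigr => f _ /=; rewrite big_distrr /=.
apply: eq_bigr => s _; rewrite /AB big_split /= mulrCA; congr (_ * (_ * _)).
by apply: eq_bigr => i _; rewrite mxE.
Qed.

Lemma cauchy_binet (A : 'M[F]_(k, m)) (B : 'M[F]_(m, k)) :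
  \det (A *m B) = \sum_S pluck A S * \det (rowsub (ksub_idx S) B).
Proof.
pose p f := sval (det_colsub_pluck f).
have pP f B' : \det (rowsub f B') = (p f).1 * \det (rowsub (ksub_idx (p f).2) B').
  by rewrite -det_tr -[in RHS]det_tr !trmx_mxsub; apply: (svalP (det_colsub_pluck f)).
pose c (A' : 'M[F]_(k, m)) S :=
  \sum_(f : {ffun 'I_k -> 'I_m} | (p f).2 == S) (\prod_i A' i (f i)) * (p f).1.
have expand A' B' :
    \det (A' *m B') = \sum_S c A' S * \det (rowsub (ksub_idx S) B').
  rewrite det_mulmx_expand.
  rewrite (partition_big (fun f : {ffun 'I_k -> 'I_m} => (p f).2) predT) //=.
  apply: eq_bigr => S _; rewrite big_distrl /=; apply: eq_bigr => f /eqP <-.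
  by rewrite pP mulrA.
suff cE S : c A S = pluck A S by rewrite expand; under eq_bigr do rewrite cE.
have selE T : \det (rowsub (ksub_idx T) (ksub_sel S)^T) = (T == S)%:R.
  by rewrite -trmx_mxsub det_tr; apply: pluck_ksub_sel.
rewrite /pluck -mulmx_ksub_selT expand (bigD1 S) //= selE eqxx mulr1.
by rewrite big1 ?addr0 // => T /negPf neTS; rewrite selE neTS mulr0.
Qed.

Definition decomposable (x : ksub m k -> F) :=
  exists (c : F) (Z : 'M[F]_(k, m)), forall T, x T = c * pluck Z T.

Lemma pluck_mulmx_tr (Y : 'M[F]_(k, m)) (g : 'M[F]_m) S :
  pluck (Y *m g^T) S =
    \sum_T \det (mxsub (ksub_idx S) (ksub_idx T) g) * pluck Y T.
Proof.
rewrite /pluck -mulmx_colsub cauchy_binet; apply: eq_bigr => T _.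
by rewrite mulrC -det_tr; congr (\det _ * _); apply/matrixP => i j; rewrite !mxE.
Qed.

Lemma det_set_col (N : 'M[F]_k) (z : 'cV[F]_k) a :
  \det (\matrix_(i, b) if b == a then z i 0 else N i b) = (\adj N *m z) a 0.
Proof.
rewrite (expand_det_col _ a) mxE; apply: eq_bigr => i _.
rewrite !mxE eqxx mulrC; congr (_ * _); rewrite /cofactor; congr (_ * \det _).
by apply/matrixP => i' j'; rewrite !mxE eq_sym (negPf (neq_lift a j')).
Qed.

(* Entry (a, j) is, up to the sign of a reordering, the coordinate of x at S with
   its a-th element replaced by j; it is linear in x. *)
Definition pluck_frame S (x : ksub m k -> F) : 'M[F]_(k, m) :=
  \matrix_(a, j)
    let p := sval (det_colsub_pluck (fun b => if b == a then j else ksub_idx S b)) in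
    p.1 * x p.2.

Lemma pluck_frame_pluck S c (Z : 'M[F]_(k, m)) :
  pluck_frame S (fun T => c * pluck Z T) =
    c *: (\adj (colsub (ksub_idx S) Z) *m Z).
Proof.
apply/matrixP => a j; rewrite mxE [RHS]mxE /= mulrCA; congr (_ * _).
rewrite -(svalP (det_colsub_pluck _)).
have -> : (\adj (colsub (ksub_idx S) Z) *m Z) a j =
          (\adj (colsub (ksub_idx S) Z) *m col j Z) a 0.
  by rewrite !mxE; apply: eq_bigr => i _; rewrite !mxE.
by rewrite -det_set_col; congr (\det _); apply/matrixP => i b; rewrite !mxE; case: eqP.
Qed.

Lemma pluck_frameE S (x : ksub m k -> F) T :
  decomposable x -> pluck (pluck_frame S x) T * x S = x S ^+ k * x T.
Proof.
case=> c [Z xE].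
have -> : pluck_frame S x = pluck_frame S (fun T => c * pluck Z T).
  by apply/matrixP => a j; rewrite !mxE /= xE.
rewrite pluck_frame_pluck !xE.
set N := colsub (ksub_idx S) Z.
have adjN : \det (\adj N) * \det N = \det N ^+ k.
  by rewrite -det_mulmx mul_adj_mx det_scalar.
have NS : pluck Z S = \det N by [].
by rewrite pluckZ pluck_mulmx exprMn NS -adjN; ring.
Qed.

End PluckerCoordinates.

Lemma row_free_pluck (F : fieldType) k m (B : 'M[F]_(k, m)) (S : ksub m k) :
  pluck B S != 0 -> row_free B.
Proof.
move=> BS_neq0.
have BS_unit : colsub (ksub_idx S) B \in unitmx by rewrite unitmxE unitfE.
rewrite /row_free eqn_leq rank_leq_row -{1}(mxrank_unit BS_unit).
by rewrite -[X in colsub _ X]mulmx1 -mulmx_colsub mxrankM_maxl.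
Qed.


Section Convergence.
Variable R : realType.
Local Notation C := R[i].

Lemma cabs_ge0 (z : C) : 0 <= cabs z.
Proof. by case: z => a b; rewrite /cabs /= sqrtr_ge0. Qed.

Lemma cabsD (x y : C) : cabs (x + y) <= cabs x + cabs y.
Proof. exact: le_normcD. Qed.

Lemma cabsM (x y : C) : cabs (x * y) = cabs x * cabs y.
Proof. exact: ComplexField.Normc.normcM. Qed.

Lemma cabs0 : cabs (0 : C) = 0.
Proof. exact: ComplexField.Normc.normc0. Qed.

Lemma cabs_eq0 (x : C) : (cabs x == 0) = (x == 0).
Proof. by apply/eqP/eqP => [/ComplexField.Normc.eq0_normc //|->]; apply: cabs0. Qed.

Lemma cabsB (x y : C) : cabs (x - y) = cabs (y - x).
Proof. by rewrite /cabs -normcN opprB. Qed.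

Definition tends_to (u : nat -> C) (l : C) :=
  forall e : R, 0 < e -> exists N, forall nu, (N <= nu)%N -> cabs (u nu - l) < e.

Lemma eq_tends_to u v l : u =1 v -> tends_to u l -> tends_to v l.
Proof.
by move=> uv ul e e0; have [N HN] := ul e e0; exists N => nu; rewrite -uv; apply: HN.
Qed.

Lemma tends_to_cst (c : C) : tends_to (fun=> c) c.
Proof. by move=> e e0; exists 0%N => nu _; rewrite subrr cabs0. Qed.

Lemma tends_to_unique u a b : tends_to u a -> tends_to u b -> a = b.
Proof.
move=> ua ub; apply/eqP; rewrite -subr_eq0 -cabs_eq0 eq_le cabs_ge0 andbT.
apply/ler_addgt0Pr => e e0; rewrite add0r.
have e2 : 0 < e / 2 by rewrite divr_gt0.
have [Na Ha] := ua _ e2; have [Nb Hb] := ub _ e2.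
pose nu := maxn Na Nb.
have := cabsD (a - u nu) (u nu - b); rewrite addrA subrK cabsB.
have := Ha nu (leq_maxl _ _); have := Hb nu (leq_maxr _ _); lra.
Qed.

Lemma tends_toD u v a b :
  tends_to u a -> tends_to v b -> tends_to (fun nu => u nu + v nu) (a + b).
Proof.
move=> ua vb e e0.
have e2 : 0 < e / 2 by rewrite divr_gt0.
have [Na Ha] := ua _ e2; have [Nb Hb] := vb _ e2.
exists (maxn Na Nb) => nu; rewrite geq_max => /andP[/Ha ha /Hb hb].
rewrite opprD addrACA; have := cabsD (u nu - a) (v nu - b); lra.
Qed.

Lemma tends_toM u v a b :
  tends_to u a -> tends_to v b -> tends_to (fun nu => u nu * v nu) (a * b).
Proof.
move=> ua vb e e0; have a0 := cabs_ge0 a; have b0 := cabs_ge0 b.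
pose d := Num.min 1 (e / (2 * (1 + cabs a + cabs b))).
have d0 : 0 < d by rewrite lt_min ltr01 divr_gt0 // mulr_gt0 //; lra.
have d1 : d <= 1 by rewrite ge_min lexx.
have de : d * (1 + cabs a + cabs b) <= e / 2.
  have : d <= e / (2 * (1 + cabs a + cabs b)) by rewrite ge_min lexx orbT.
  by rewrite ler_pdivlMr ?ler_pdivlMr //; lra.
have [Na Ha] := ua _ d0; have [Nb Hb] := vb _ d0.
exists (maxn Na Nb) => nu; rewrite geq_max => /andP[/Ha ha /Hb hb].
set x := u nu - a in ha *; set y := v nu - b in hb *.
have -> : u nu * v nu - a * b = x * y + a * y + b * x.
  by rewrite /x /y !mulrBr !mulrBl; ring.
have := cabsD (x * y + a * y) (b * x); have := cabsD (x * y) (a * y).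
rewrite !cabsM; have x0 := cabs_ge0 x; have y0 := cabs_ge0 y.
have xy : cabs x * cabs y <= d * d by apply: ler_pM => //; apply: ltW.
have ay : cabs a * cabs y <= cabs a * d by apply: ler_wpM2l => //; apply: ltW.
have bx : cabs b * cabs x <= cabs b * d by apply: ler_wpM2l => //; apply: ltW.
nra.
Qed.

Lemma tends_to_sum (I : Type) (r : seq I) (P : pred I) (u : I -> nat -> C) l :
  (forall i, P i -> tends_to (u i) (l i)) ->
  tends_to (fun nu => \sum_(i <- r | P i) u i nu) (\sum_(i <- r | P i) l i).
Proof.
move=> ul; elim: r => [|x r IH].
  by rewrite big_nil; apply: eq_tends_to (tends_to_cst 0) => nu; rewrite big_nil.
rewrite big_cons; case: ifP => Px.
  by apply: eq_tends_to (tends_toD (ul _ Px) IH) => nu; rewrite big_cons Px.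
by apply: eq_tends_to IH => nu; rewrite big_cons Px.
Qed.

Lemma tends_to_prod (I : Type) (r : seq I) (P : pred I) (u : I -> nat -> C) l :
  (forall i, P i -> tends_to (u i) (l i)) ->
  tends_to (fun nu => \prod_(i <- r | P i) u i nu) (\prod_(i <- r | P i) l i).
Proof.
move=> ul; elim: r => [|x r IH].
  by rewrite big_nil; apply: eq_tends_to (tends_to_cst 1) => nu; rewrite big_nil.
rewrite big_cons; case: ifP => Px.
  by apply: eq_tends_to (tends_toM (ul _ Px) IH) => nu; rewrite big_cons Px.
by apply: eq_tends_to IH => nu; rewrite big_cons Px.
Qed.

Lemma tends_toX u a k : tends_to u a -> tends_to (fun nu => u nu ^+ k) (a ^+ k).
Proof.
move=> ua; elim: k => [|k IH].
  by rewrite expr0; apply: eq_tends_to (tends_to_cst 1) => nu; rewrite expr0.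
by rewrite exprS; apply: eq_tends_to (tends_toM ua IH) => nu; rewrite exprS.
Qed.

Lemma tends_to_det k (M : nat -> 'M[C]_k) (L : 'M[C]_k) :
  (forall i j, tends_to (fun nu => M nu i j) (L i j)) ->
  tends_to (fun nu => \det (M nu)) (\det L).
Proof.
move=> ML; apply: tends_to_sum => s _; apply: tends_toM (tends_to_cst _) _.
exact: tends_to_prod.
Qed.

Lemma cvg_mat_tends_to (I J : finType) (M : nat -> I -> J -> C) L :
  cvg_mat M L -> forall i j, tends_to (fun nu => M nu i j) (L i j).
Proof. by move=> ML i j e e0; have [N HN] := ML e e0; exists N => nu /HN. Qed.

Lemma limit_of_neq0 (I J : finType) (M : nat -> I -> J -> C) L :
  limit_of M L -> exists i j, L i j != 0.
Proof.
case=> c [_ [normc ML]]; have [N HN] := ML (1 / 2) (divr_gt0 ltr01 (ltr0Sn _ 1)).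
have [_ [i [j ij1]]] := normc N; exists i, j.
by apply: contraTneq (HN N (leqnn N) i j) => ->; rewrite subr0 ij1 -leNgt; lra.
Qed.

End Convergence.

Section Closedness.
Variable R : realType.
Local Notation C := R[i].
Variables k m : nat.
Hypothesis km : (k <= m)%N.

Lemma decomposable_closed (q : nat -> ksub m k -> C) (p : ksub m k -> C) S :
  (forall nu, decomposable (q nu)) -> (forall T, tends_to (fun nu => q nu T) (p T)) ->
  p S != 0 ->
  exists2 B : 'M[C]_(k, m), row_free B &
    exists2 c : C, c != 0 & forall T, p T = c * pluck B T.
Proof.
move=> q_dec qp pS0; pose B := pluck_frame km S p.
(* pluck_frameE is a polynomial identity in q nu, so it passes to the limit. *)
have BE T : pluck B T * p S = p S ^+ k * p T.
  apply: (@tends_to_unique _ (fun nu => pluck (pluck_frame km S (q nu)) T * q nu S)).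
    apply: tends_toM (qp S); apply: tends_to_det => a b.
    rewrite !mxE /=; apply: eq_tends_to (tends_toM (tends_to_cst _) (qp _)) => nu.
    by rewrite !mxE.
  apply: eq_tends_to (tends_toM (tends_toX k (qp S)) (qp T)) => nu.
  by rewrite pluck_frameE.
have pSk0 : p S ^+ k != 0 by rewrite expf_neq0.
have BS : pluck B S = p S ^+ k by apply: (mulIf pS0); rewrite BE.
exists B; first by apply: (@row_free_pluck _ _ _ B S); rewrite BS.
exists (p S / p S ^+ k) => [|T]; first by rewrite mulf_neq0 ?invr_eq0.
by rewrite mulrAC [p S * _]mulrC BE mulrAC divff // mul1r.
Qed.

End Closedness.

Section PluckerForms.
Variable F : numFieldType.
Variables k m : nat.
Implicit Types (w : ksub m k -> F) (Y Z : 'M[F]_(k, m)).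

Definition pluck_form w Y := \sum_T w T * pluck Y T.

Definition set_row Y a (y : 'rV[F]_m) : 'M[F]_(k, m) :=
  \matrix_(i, j) if i == a then y 0 j else Y i j.

Lemma set_row_id Y a : set_row Y a (row a Y) = Y.
Proof. by apply/matrixP => i j; rewrite !mxE; case: eqP => // ->. Qed.

Lemma pluck_form_set_rowD w Y a y z c :
  pluck_form w (set_row Y a (y + c *: z)) =
    pluck_form w (set_row Y a y) + c * pluck_form w (set_row Y a z).
Proof.
rewrite /pluck_form big_distrr -big_split /=; apply: eq_bigr => T _.
rewrite mulrCA -mulrDr; congr (_ * _); rewrite /pluck -[d in _ = d + _]mul1r.
apply: (determinant_multilinear (i0 := a)).
- by apply/rowP => j; rewrite !mxE eqxx mul1r.
- by apply/matrixP => i j; rewrite !mxE eq_sym (negPf (neq_lift a i)).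
- by apply/matrixP => i j; rewrite !mxE eq_sym (negPf (neq_lift a i)).
Qed.

Lemma pluck_formZ w t Y : pluck_form w (t *: Y) = t ^+ k * pluck_form w Y.
Proof.
by rewrite /pluck_form big_distrr; apply: eq_bigr => T _; rewrite pluckZ mulrCA.
Qed.

Lemma pluck_formB w w' c Y :
  pluck_form (fun T => w' T - c * w T) Y = pluck_form w' Y - c * pluck_form w Y.
Proof.
rewrite /pluck_form big_distrr -sumrB; apply: eq_bigr => T _.
by rewrite mulrBl -mulrA.
Qed.

Lemma pluck_form_poly w A B :
  exists p : {poly F}, forall t, p.[t] = pluck_form w (A + t *: B).
Proof.
exists (\sum_T (w T)%:P * \det (\matrix_(a, b)
     ((A a (ksub_idx T b))%:P + 'X * (B a (ksub_idx T b))%:P))) => t.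
rewrite horner_sum; apply: eq_bigr => T _; rewrite hornerM hornerC; congr (_ * _).
rewrite -horner_evalE -det_map_mx; congr (\det _); apply/matrixP => i j.
by rewrite !mxE /= horner_evalE hornerD hornerM hornerX !hornerC.
Qed.

Lemma poly_vanishing (p : {poly F}) : (forall t, t != 0 -> p.[t] = 0) -> p = 0.
Proof.
move=> p0; apply: (@roots_geq_poly_eq0 _ p [seq i.+1%:R | i <- iota 0 (size p)]).
- by apply/allP => _ /mapP [i _ ->]; apply/rootP/p0; rewrite pnatr_eq0.
- by rewrite map_inj_uniq ?iota_uniq // => i j /eqP; rewrite eqr_nat => /eqP [].
- by rewrite size_map size_iota.
Qed.

Section ZeroLocus.
Variables (w w' : ksub m k -> F) (Y0 : 'M[F]_(k, m)).
Hypothesis zero_locus_sub : forall Y, pluck_form w Y = 0 -> pluck_form w' Y = 0.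
Hypothesis wY0 : pluck_form w Y0 != 0.
Hypothesis w'Y0 : pluck_form w' Y0 = 0.

Lemma pluck_form_set_row_eq0 Z a y :
  pluck_form w Z != 0 -> pluck_form w' Z = 0 -> pluck_form w' (set_row Z a y) = 0.
Proof.
move=> wZ w'Z; pose c := pluck_form w (set_row Z a y) / pluck_form w Z.
have : pluck_form w (set_row Z a (y + (- c) *: row a Z)) = 0.
  by rewrite pluck_form_set_rowD set_row_id mulNr mulfVK // subrr.
by move/zero_locus_sub; rewrite pluck_form_set_rowD set_row_id w'Z mulr0 addr0.
Qed.

(* Replace the rows of Y0 by those of t Y one at a time; the factor p, with
   p(0) = w(Y0) != 0, keeps the induction away from the zeros of w. *)
Lemma pluck_form_eq0_top_rows Y a : (a <= k)%N ->
  forall t, pluck_form w' (Y0 + t *: \matrix_(i, j) if (i < a)%N then Y i j else 0) = 0.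
Proof.
elim: a => [_ t|a IH lt_ak t].
  rewrite (_ : \matrix_(i, j) _ = 0) ?scaler0 ?addr0 //.
  by apply/matrixP => i j; rewrite !mxE.
set M := fun b => \matrix_(i, j) if (i < b)%N then Y i j else (0 : F).
pose a' : 'I_k := Ordinal lt_ak.
have setE s :
    Y0 + s *: M a.+1 = set_row (Y0 + s *: M a) a' (row a' Y0 + s *: row a' Y).
  apply/matrixP => i j; rewrite !mxE ltnS leq_eqVlt.
  have [->|ne_ia] := eqVneq i a'; first by rewrite /= eqxx.
  by move: ne_ia; rewrite -val_eqE /= => /negPf ->.
have [p pE] := pluck_form_poly w Y0 (M a).
have [q qE] := pluck_form_poly w' Y0 (M a.+1).
have p_neq0 : p != 0.
  by apply: contraNneq wY0 => p0; rewrite -[Y0]addr0 -(scale0r (M a)) -pE p0 horner0.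
have : p * q = 0.
  apply: poly_vanishing => s _; rewrite hornerM pE qE.
  have [->|wYs] := eqVneq (pluck_form w (Y0 + s *: M a)) 0; first by rewrite mul0r.
  by rewrite setE pluck_form_set_row_eq0 ?mulr0 ?IH // ltnW.
by move/eqP; rewrite mulf_eq0 (negPf p_neq0) => /eqP q0; rewrite -qE q0 horner0.
Qed.

Lemma pluck_form_eq0 Y : pluck_form w' Y = 0.
Proof.
have [q qE] := pluck_form_poly w' Y Y0.
have : 'X * q = 0.
  apply: poly_vanishing => s s0; rewrite hornerM hornerX qE.
  have -> : Y + s *: Y0 =
      s *: (Y0 + s^-1 *: \matrix_(i, j) if (i < k)%N then Y i j else 0).
    rewrite scalerDr scalerA divff // scale1r addrC; congr (_ + _).
    by apply/matrixP => i j; rewrite !mxE ltn_ord.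
  by rewrite pluck_formZ pluck_form_eq0_top_rows // !mulr0.
move/eqP; rewrite mulf_eq0 polyX_eq0 => /eqP q0.
by rewrite -[Y]addr0 -(scale0r Y0) -qE q0 horner0.
Qed.

End ZeroLocus.

Lemma pluck_form_proportional w w' Y0 :
  (forall Y, pluck_form w Y = 0 -> pluck_form w' Y = 0) -> pluck_form w Y0 != 0 ->
  forall Y, pluck_form w' Y * pluck_form w Y0 = pluck_form w' Y0 * pluck_form w Y.
Proof.
move=> sub_w wY0 Y; pose l := pluck_form w' Y0 / pluck_form w Y0.
have w''Y0 : pluck_form (fun T => w' T - l * w T) Y0 = 0.
  by rewrite pluck_formB mulfVK // subrr.
have sub_w'' Z : pluck_form w Z = 0 -> pluck_form (fun T => w' T - l * w T) Z = 0.
  by move=> wZ; rewrite pluck_formB wZ (sub_w _ wZ) mulr0 subrr.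
have /eqP := pluck_form_eq0 sub_w'' wY0 w''Y0 Y.
by rewrite pluck_formB subr_eq0 => /eqP ->; rewrite /l mulrAC divfK.
Qed.

End PluckerForms.

Lemma kernel_mx_sub (F : fieldType) r m k (B0 : 'M[F]_(r, m)) :
  (\rank B0 + k = m)%N ->
  exists K : 'M[F]_(m, k), forall x : 'rV[F]_m, x *m K = 0 -> (x <= B0)%MS.
Proof.
move=> rk; have rank_coker : \rank (cokermx B0) = k.
  by rewrite mxrank_coker -[X in (X - _)%N]rk addKn.
(* Generalizing the width l of the column basis avoids a cast from \rank to k. *)
suff sub_ker l (C1 : 'M[F]_(m, l)) C2 : C1 *m C2 = cokermx B0 -> l = k ->
    exists K : 'M[F]_(m, k), forall x : 'rV[F]_m, x *m K = 0 -> (x <= B0)%MS.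
  exact: sub_ker (mulmx_base _) rank_coker.
move=> C12 lk; subst l; exists C1 => x xC1.
by rewrite submxE -C12 mulmxA xC1 mul0mx.
Qed.

Section Incidence.
Variable R : realType.
Local Notation C := R[i].
Variables k m : nat.

Lemma nonzero_row (x : 'rV[C]_m) : x != 0 -> nonzero (fun j => x 0 j).
Proof.
move=> x0; case: (pickP (fun j => x 0 j != 0)) => [j xj | x_eq0]; first by exists j.
by case/eqP: x0; apply/rowP => j; rewrite mxE; apply/eqP/negbFE/x_eq0.
Qed.

Lemma meet_of_det_mulmx_eq0 (Y B0 : 'M[C]_(k, m)) (K : 'M[C]_(m, k)) :
  row_free Y -> (forall x : 'rV[C]_m, x *m K = 0 -> (x <= B0)%MS) ->
  \det (Y *m K) = 0 -> exists x, in_plane Y x /\ in_plane B0 x.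
Proof.
move=> Y_free K_ker /eqP /det0P [v v0 vYK]; pose x := v *m Y.
have x0 : x != 0.
  by apply: contra v0 => /eqP vY0; apply/eqP/(row_free_inj Y_free); rewrite mul0mx.
have /submxP [u xE] : (x <= B0)%MS by apply: K_ker; rewrite -mulmxA.
exists (fun j => x 0 j); split; split; try exact: nonzero_row.
  by exists (fun a => v 0 a) => j; rewrite mxE.
by exists (fun a => u 0 a) => j; rewrite xE mxE.
Qed.

End Incidence.

Section LimitImage.
Variable R : realType.
Local Notation C := R[i].
Variable n : nat.
Local Notation m := n.*2.+2.
Local Notation k := n.+1.
Variables (G : 'M[C]_m -> Prop) (s : nat -> 'M[C]_m).
Variable That : ksub m k -> ksub m k -> C.
Hypothesis s_normal : normal_seq G s.
Hypothesis That_limit : limit_of (fun nu => extp k (s nu)) That.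
Variables (B0 : 'M[C]_(k, m)) (K : 'M[C]_(m, k)).
Hypothesis B0_Omega : forall x, in_plane B0 x -> Omega G x.
Hypothesis K_ker : forall x : 'rV[C]_m, x *m K = 0 -> (x <= B0)%MS.

Lemma leq_plane_dim : (k <= m)%N.
Proof. by rewrite ltnS -addnn leqW // leq_addl. Qed.

Definition image_pluck (Y : 'M[C]_(k, m)) : ksub m k -> C := appl That (pluck Y).

(* By Cauchy-Binet, \det (B *m K) = \sum_T pluck B T * meet_form T, and it
   vanishes iff the plane B meets B0. *)
Definition meet_form (T : ksub m k) : C := \det (rowsub (ksub_idx T) K).

Lemma image_pluck_ksub_sel T S : image_pluck (ksub_sel C T) S = That S T.
Proof.
rewrite /image_pluck /appl (bigD1 T) //= pluck_ksub_sel eqxx mulr1.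
by rewrite big1 ?addr0 // => T' /negPf neT'T; rewrite pluck_ksub_sel neT'T mulr0.
Qed.

Lemma image_pluck_decomposable Y S : image_pluck Y S != 0 ->
  exists2 B : 'M[C]_(k, m), row_free B &
    exists2 c : C, c != 0 & forall T, image_pluck Y T = c * pluck B T.
Proof.
case: That_limit => c [_ [_ /cvg_mat_tends_to c_lim]].
apply: (decomposable_closed leq_plane_dim
          (q := fun nu T => c nu * pluck (Y *m (s nu)^T) T)).
  by move=> nu; exists (c nu), (Y *m (s nu)^T).
move=> T; rewrite /image_pluck /appl; apply: eq_tends_to (tends_to_sum _
  (fun T' _ => tends_toM (c_lim T T') (tends_to_cst (pluck Y T')))) => nu.
rewrite (pluck_mulmx_tr leq_plane_dim) big_distrr /=.
by apply: eq_bigr => T' _; rewrite mulrA.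
Qed.

Lemma limit_plane_of_image B u : row_free B -> nonzero (pluck B) ->
  (forall S, pluck B S = appl That u S) -> limit_plane G B.
Proof.
move=> B_free B_neq0 BE; split => //; exists s; split => //.
by exists That; split => //; split => //; exists u.
Qed.

Lemma image_plane_transversal B u : row_free B -> nonzero (pluck B) ->
  (forall S, pluck B S = appl That u S) -> \det (B *m K) != 0.
Proof.
move=> B_free B_neq0 BE.
apply/eqP => /(meet_of_det_mulmx_eq0 B_free K_ker) [x [xB xB0]].
have [_ x_notin_Lambda] := B0_Omega xB0; apply: x_notin_Lambda.
by exists B; split => //; apply: limit_plane_of_image BE.
Qed.

Lemma image_pluck_transversal Y :
  nonzero (image_pluck Y) -> \sum_T image_pluck Y T * meet_form T != 0.
Proof.
case=> S imS; have [B B_free [c c0 imE]] := image_pluck_decomposable imS.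
have -> : \sum_T image_pluck Y T * meet_form T = c * \det (B *m K).
  rewrite (cauchy_binet leq_plane_dim) big_distrr /=.
  by apply: eq_bigr => T _; rewrite imE mulrA.
rewrite mulf_neq0 //.
apply: (@image_plane_transversal _ (fun T => c^-1 * pluck Y T)) => //.
  by exists S; apply: contraNneq imS; rewrite imE => ->; rewrite mulr0.
move=> S'; rewrite /appl; under eq_bigr do rewrite mulrCA.
by rewrite -big_distrr /= -[\sum_j _]/(image_pluck Y S') imE mulKf.
Qed.

Definition meet_form_pullback (T : ksub m k) : C := \sum_T' meet_form T' * That T' T.

Lemma pluck_form_meet_form_pullback Y :
  pluck_form meet_form_pullback Y = \sum_T image_pluck Y T * meet_form T.
Proof.
rewrite /pluck_form /meet_form_pullback; under eq_bigr do rewrite big_distrl /=.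
rewrite exchange_big; apply: eq_bigr => T _; rewrite /image_pluck /appl big_distrl /=.
by apply: eq_bigr => T' _; rewrite [RHS]mulrC mulrA.
Qed.

Lemma image_pluck_collinear Y0 : nonzero (image_pluck Y0) -> forall Y S,
  image_pluck Y S * pluck_form meet_form_pullback Y0 =
    image_pluck Y0 S * pluck_form meet_form_pullback Y.
Proof.
move=> imY0 Y S.
apply: (@pluck_form_proportional _ _ _ meet_form_pullback (That S)).
  move=> Z; rewrite pluck_form_meet_form_pullback => /eqP; apply: contraTeq => imZ.
  by apply: image_pluck_transversal; exists S.
by rewrite pluck_form_meet_form_pullback image_pluck_transversal.
Qed.

Lemma limit_image_plane :
  exists2 B : 'M[C]_(k, m), row_free B & forall v : ksub m k -> C,
    (nonzero v /\ exists u, forall S, v S = appl That u S) <->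
    (exists c : C, c != 0 /\ forall S, v S = c * pluck B S).
Proof.
have [i [j Tij]] := limit_of_neq0 That_limit.
pose Y0 := ksub_sel C j; pose f Y := pluck_form meet_form_pullback Y.
have imY0 : image_pluck Y0 i != 0 by rewrite image_pluck_ksub_sel.
have fY0 : f Y0 != 0.
  by rewrite /f pluck_form_meet_form_pullback image_pluck_transversal //; exists i.
have [B B_free [c0 c00 imY0E]] := image_pluck_decomposable imY0.
have imageE u S :
    appl That u S = (\sum_T f (ksub_sel C T) / f Y0 * u T) * image_pluck Y0 S.
  rewrite /appl big_distrl /=; apply: eq_bigr => T _; rewrite -image_pluck_ksub_sel.
  have /(canRL (mulfK fY0)) -> :
      image_pluck (ksub_sel C T) S * f Y0 = image_pluck Y0 S * f (ksub_sel C T).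
    by apply: image_pluck_collinear; exists i.
  by ring.
exists B => // v; split.
  case=> [[S vS] [u vE]]; pose a := \sum_T f (ksub_sel C T) / f Y0 * u T.
  exists (a * c0); split => [|S']; last by rewrite vE imageE imY0E mulrA.
  by apply: contraNneq vS => ac0; rewrite vE imageE imY0E mulrA ac0 mul0r.
case=> c [c_neq0 vE]; split.
  exists i; rewrite vE mulf_neq0 //.
  by apply: contraNneq imY0 => Bi0; rewrite imY0E Bi0 mulr0.
exists (fun T => c / c0 * pluck Y0 T) => S; rewrite /appl.
under eq_bigr do rewrite mulrCA.
by rewrite -big_distrr /= -[\sum_j _]/(image_pluck Y0 S) imY0E vE mulrA divfK.
Qed.

End LimitImage.

Theorem proposition4p7 (R : realType) (n : nat)
    (G : 'M[R[i]]_(n.*2.+2) -> Prop) :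
  type_L G ->
  forall s : nat -> 'M[R[i]]_(n.*2.+2), normal_seq G s ->
  forall That, limit_of (fun nu => extp n.+1 (s nu)) That ->
  exists B : 'M[R[i]]_(n.+1, n.*2.+2), row_free B /\
    forall v : ksub n.*2.+2 n.+1 -> R[i],
      (nonzero v /\ exists u, forall S, v S = appl That u S) <->
      (exists c : R[i], c != 0 /\ forall S, v S = c * plucker B S).
Proof.
move=> [_ [_ [D [[_ [B0 [B0_free B0_D]]] D_Omega]]]] s s_normal That That_limit.
have [K K_ker] : exists K : 'M[R[i]]_(n.*2.+2, n.+1),
    forall x : 'rV_(n.*2.+2), x *m K = 0 -> (x <= B0)%MS.
  by apply: kernel_mx_sub; rewrite (eqP B0_free) addSn addnS addnn.
have B0_Omega x : in_plane B0 x -> Omega G x by move/B0_D/D_Omega.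
have [B B_free BE] := limit_image_plane s_normal That_limit B0_Omega K_ker.
by exists B.
Qed.
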